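(* Let $X$ be a graph with signless Laplacian $Q=\sum_{\lambda}\lambda E_\lambda$ and let $A_{\mathcal L}=\sum_\theta\theta F_\theta$ be the adjacency matrix of its line graph (spectral decompositions with orthogonal projections). Let $\{a,b\},\{\alpha,\beta\}\in E(X)$. For every eigenvalue $\lambda\neq0$ of $Q$, $\lambda-2$ is an eigenvalue of $A_{\mathcal L}$, and for each fixed sign $\pm$, $$F_{\lambda-2}\mathbf f_{ab}=\pm F_{\lambda-2}\mathbf f_{\alpha\beta}\iff E_\lambda(\mathbf e_a+\mathbf e_b)=\pm E_\lambda(\mathbf e_\alpha+\mathbf e_\beta).$$
   Context: The line graph $\mathcal L(X)$ has vertex set $E(X)$ with edges adjacent iff they share an endpoint; $\mathbf f_{ab}$ is the standard basis vector of the vertex of $\mathcal L(X)$ corresponding to edge $\{a,b\}$. $Q=D+A$. *)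

From HB Require Import structures.
From mathcomp Require Import all_boot all_order all_algebra.
Set Implicit Arguments. Unset Strict Implicit. Unset Printing Implicit Defensive.
Import Order.TTheory GRing.Theory Num.Theory.
Local Open Scope ring_scope.

(* A simple graph X on vertex set 'I_n is given by a symmetric irreflexive
   relation adj. *)

Definition edges (n : nat) (adj : rel 'I_n) : {set {set 'I_n}} :=
  [set [set p.1; p.2] | p in [set p : 'I_n * 'I_n | adj p.1 p.2]].

(* Enumeration of the edges: vertex i of the line graph is edge_of i. *)
Definition edge_of (n : nat) (adj : rel 'I_n) (i : 'I_#|edges adj|)
  : {set 'I_n} := enum_val i.

Definition signless_lap (R : nzRingType) (n : nat) (adj : rel 'I_n)
  : 'M[R]_n :=
  \matrix_(i, j) ((if i == j then #|[set k | adj i k]| else 0)%:R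
                  + (adj i j)%:R).

Definition line_adj (R : nzRingType) (n : nat) (adj : rel 'I_n)
  : 'M[R]_#|edges adj| :=
  \matrix_(i, j) ((i != j) && (edge_of i :&: edge_of j != set0))%:R.

Definition is_eigenproj (R : fieldType) (m : nat) (A : 'M[R]_m) (a : R)
  (P : 'M[R]_m) : Prop :=
  P^T = P /\ P *m P = P /\ (P == eigenspace A a)%MS.

Definition basis_vec (R : nzRingType) (m : nat) (i : 'I_m) : 'cV[R]_m :=
  delta_mx i 0.

From HB Require Import structures.
From mathcomp Require Import all_boot all_order all_algebra.
Import Order.TTheory GRing.Theory Num.Theory.
Set Implicit Arguments. Unset Strict Implicit.
Local Open Scope ring_scope.

(* With N the vertex-edge incidence matrix, Q = N N^T and A_L = N^T N - 2.
   Hence N intertwines the eigenprojections, E_lam N = N F_(lam-2), and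
   N^T E_lam = F_(lam-2) N^T.  Since e_a + e_b = N f_ab, multiplying
   F f_ab = ± F f_ab' by N gives the condition on E; conversely multiplying
   E N f_ab = ± E N f_ab' by N^T gives lam F f_ab = ± lam F f_ab', and lam != 0
   can be cancelled. *)

Section EigenProjection.
Variables (R : fieldType) (k : nat) (A : 'M[R]_k) (a : R) (P : 'M[R]_k).
Hypothesis hP : is_eigenproj A a P.

Lemma eigenproj_mulmx_id p (M : 'M_(p, k)) :
  (M <= eigenspace A a)%MS -> M *m P = M.
Proof.
case: hP => _ [PP Pe]; rewrite -(eqmxP Pe) => /submxP [D ->].
by rewrite -mulmxA PP.
Qed.

Lemma eigenproj_mulmxA : P *m A = a *: P.
Proof. by case: hP => _ [_ /andP [/eigenspaceP]]. Qed.

End EigenProjection.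

Section Factorization.
Variables (R : fieldType) (n m : nat) (N : 'M[R]_(n, m)).
Variables (Q : 'M[R]_n) (L : 'M[R]_m) (c : R).
Hypothesis NNt : N *m N^T = Q.
Hypothesis NtN : N^T *m N = L + c%:M.

Lemma eigen_mulmx_factor p (M : 'M_(p, n)) lam :
  M *m Q = lam *: M -> (M *m N) *m L = (lam - c) *: (M *m N).
Proof.
move=> MQ; have -> : L = N^T *m N - c%:M by rewrite NtN addrK.
rewrite mulmxBr mul_mx_scalar !mulmxA -(mulmxA M) NNt MQ.
by rewrite -scalemxAl scalerBl.
Qed.

Lemma eigen_mulmx_factorT p (M : 'M_(p, m)) lam :
  M *m L = (lam - c) *: M -> (M *m N^T) *m Q = lam *: (M *m N^T).
Proof.
move=> ML; rewrite -NNt !mulmxA -(mulmxA M) NtN mulmxDr ML mul_mx_scalar.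
by rewrite -scalerDl subrK scalemxAl.
Qed.

Lemma eigenvalue_factor lam :
  eigenvalue Q lam -> lam != 0 -> eigenvalue L (lam - c).
Proof.
move=> /eigenvalueP [x xQ x_neq0] lam_neq0; apply/eigenvalueP.
exists (x *m N); first exact: eigen_mulmx_factor.
have : x *m N *m N^T = lam *: x by rewrite -mulmxA NNt.
apply: contra_eqN => /eqP ->; rewrite mul0mx eq_sym scalemx_eq0.
by rewrite negb_or lam_neq0.
Qed.

Variables (lam : R) (E : 'M[R]_n) (F : 'M[R]_m).
Hypothesis hE : is_eigenproj Q lam E.
Hypothesis hF : is_eigenproj L (lam - c) F.

Lemma eigenproj_intertwine : E *m N = N *m F.
Proof.
have ENF : E *m N *m F = E *m N.
  apply: (eigenproj_mulmx_id hF); apply/eigenspaceP.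
  exact/eigen_mulmx_factor/(eigenproj_mulmxA hE).
have FNtE : F *m N^T *m E = F *m N^T.
  apply: (eigenproj_mulmx_id hE); apply/eigenspaceP.
  exact/eigen_mulmx_factorT/(eigenproj_mulmxA hF).
have [[Et _] [Ft _]] := (hE, hF).
by rewrite -ENF -mulmxA; have := congr1 trmx FNtE; rewrite !trmx_mul trmxK Et Ft.
Qed.

Lemma eigenproj_intertwineT : N^T *m E = F *m N^T.
Proof.
have [[Et _] [Ft _]] := (hE, hF).
by rewrite -Et -Ft -!trmx_mul eigenproj_intertwine.
Qed.

Lemma eigenproj_mulmx_eq p (x y : 'M_(m, p)) :
  lam != 0 -> F *m x = F *m y <-> E *m (N *m x) = E *m (N *m y).
Proof.
move=> lam_neq0; have FNtN : F *m N^T *m N = lam *: F.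
  by rewrite -mulmxA NtN mulmxDr (eigenproj_mulmxA hF) mul_mx_scalar
    -scalerDl subrK.
split=> [Fxy | ENxy]; first by rewrite !mulmxA eigenproj_intertwine -!mulmxA Fxy.
have : lam *: (F *m x) = lam *: (F *m y).
  by rewrite !scalemxAl -FNtN -eigenproj_intertwineT -!mulmxA ENxy.
by move/(congr1 (fun w => lam^-1 *: w)); rewrite !scalerA mulVf // !scale1r.
Qed.

End Factorization.

Lemma sum_mem_natr (R : nzRingType) (T : finType) (A : {set T}) :
  \sum_(v : T) ((v \in A)%:R : R) = #|A|%:R.
Proof.
rewrite -sumr_const [RHS]big_mkcond; apply: eq_bigr => v _.
by case: (v \in A).
Qed.

Section Incidence.
Variables (R : nzRingType) (n : nat) (adj : rel 'I_n).
Hypothesis adj_sym : symmetric adj.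
Hypothesis adj_irr : irreflexive adj.

Definition incidence_mx : 'M[R]_(n, #|edges adj|) :=
  \matrix_(v, e) (v \in edge_of e)%:R.

Lemma edgesP (S : {set 'I_n}) :
  reflect (exists x y, adj x y /\ S = [set x; y]) (S \in edges adj).
Proof.
apply: (iffP imsetP) => [[p] | [x [y [xy ->]]]].
  by rewrite inE => p12 ->; exists p.1, p.2.
by exists (x, y); rewrite ?inE.
Qed.

Lemma card_edge_of (e : 'I_#|edges adj|) : #|edge_of e| = 2%N.
Proof.
rewrite /edge_of; have /edgesP [x [y [xy ->]]] := enum_valP e.
by rewrite cards2 (_ : x != y) //; apply: contraTneq xy => ->; rewrite adj_irr.
Qed.

Lemma card_edge_ofI (e e' : 'I_#|edges adj|) : e != e' ->
  #|edge_of e :&: edge_of e'| = (edge_of e :&: edge_of e' != set0).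
Proof.
move=> ne; suff : (#|edge_of e :&: edge_of e'| <= 1)%N.
  by rewrite -cards_eq0; case: #|_| => [|[|]].
rewrite leqNgt; apply: contra ne => I2; apply/eqP/enum_val_inj.
have Ie : edge_of e :&: edge_of e' = edge_of e.
  by apply/eqP; rewrite eqEcard subsetIl card_edge_of.
have Ie' : edge_of e :&: edge_of e' = edge_of e'.
  by apply/eqP; rewrite eqEcard subsetIr card_edge_of.
by rewrite -[enum_val e]/(edge_of e) -Ie Ie'.
Qed.

Lemma card_edges_at (u : 'I_n) :
  #|[set S in edges adj | u \in S]| = #|[set k | adj u k]|.
Proof.
have -> : [set S in edges adj | u \in S] = (fun k => [set u; k]) @: [set k | adj u k].
  apply/setP => S; rewrite !inE; apply/andP/imsetP.
    case=> /edgesP [x [y [xy ->]]] /set2P [] ->; first by exists y; rewrite ?inE.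
    by exists x; rewrite ?inE 1?adj_sym // setUC.
  case=> k; rewrite inE => uk ->; split; last by rewrite set21.
  by apply/edgesP; exists u, k.
apply: card_in_imset => k1 k2; rewrite !inE => uk1 _ e12.
have /set2P [k1u|] // : k1 \in [set u; k2] by rewrite -e12 set22.
by rewrite k1u adj_irr in uk1.
Qed.

Lemma card_edges_between (u v : 'I_n) : u != v ->
  #|[set S in edges adj | (u \in S) && (v \in S)]| = adj u v.
Proof.
move=> uv; case: (boolP (adj u v)) => [adj_uv | nadj_uv].
  suff -> : [set S in edges adj | (u \in S) && (v \in S)] = [set [set u; v]].
    by rewrite cards1.
  apply/setP => S; rewrite !inE; apply/andP/eqP => [[] | ->].
    case/edgesP => [x [y [_ ->]]] /andP [/set2P [] ? /set2P [] ?]; subst;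
      first [by rewrite eqxx in uv | by [] | exact: setUC].
  by rewrite set21 set22; split=> //; apply/edgesP; exists u, v.
apply/eqP; rewrite cards_eq0; apply/eqP/setP => S; rewrite !inE.
apply/negP => /andP [/edgesP [x [y [xy ->]]] /andP [/set2P [] ? /set2P [] ?]];
  subst; first [by rewrite eqxx in uv | by rewrite xy in nadj_uv
        | by rewrite adj_sym xy in nadj_uv].
Qed.

Lemma card_edge_of_set (P : pred {set 'I_n}) :
  #|[set e : 'I_#|edges adj| | P (edge_of e)]| = #|[set S in edges adj | P S]|.
Proof.
rewrite -[LHS]sum1_card -[RHS]sum1_card.
rewrite [RHS](eq_bigl (fun S => (S \in edges adj) && P S)) => [|S]; last by rewrite inE.
by rewrite big_enum_val_cond; apply: eq_bigl => e; rewrite inE.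
Qed.

Lemma incidence_mx_mulmx_tr :
  incidence_mx *m incidence_mx^T = signless_lap R adj.
Proof.
apply/matrixP => u v; rewrite !mxE.
rewrite (eq_bigr (fun e => (e \in [set e | (u \in edge_of e) && (v \in edge_of e)])%:R));
  last by move=> e _; rewrite !mxE -natrM mulnb inE.
rewrite sum_mem_natr (card_edge_of_set (fun S => (u \in S) && (v \in S))).
case: eqVneq => [<- | uv]; last by rewrite add0r card_edges_between.
rewrite adj_irr addr0 -card_edges_at; congr _%:R.
by apply: eq_card => S; rewrite !inE andbb.
Qed.

Lemma tr_incidence_mx_mulmx :
  incidence_mx^T *m incidence_mx = line_adj R adj + 2%:M.
Proof.
apply/matrixP => e e'; rewrite !mxE.
rewrite (eq_bigr (fun v => (v \in edge_of e :&: edge_of e')%:R));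
  last by move=> v _; rewrite !mxE -natrM mulnb inE.
rewrite sum_mem_natr; case: eqVneq => [<- | ne] /=.
  by rewrite setIid card_edge_of add0r.
by rewrite card_edge_ofI // addr0.
Qed.

Lemma incidence_mx_basis (e : 'I_#|edges adj|) (x y : 'I_n) :
  adj x y -> edge_of e = [set x; y] ->
  incidence_mx *m basis_vec R e = basis_vec R x + basis_vec R y.
Proof.
move=> xy exy; rewrite /basis_vec -colE; apply/matrixP => v l.
rewrite !mxE exy !inE ord1 eqxx !andbT.
case: (eqVneq v x) => [-> | _] /=; last by rewrite add0r.
have x_neq_y : x != y by apply: contraTneq xy => ->; rewrite adj_irr.
by rewrite (negbTE x_neq_y) addr0.
Qed.

End Incidence.

Theorem mainTheorem12 (R : rcfType) (n : nat) (adj : rel 'I_n)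
  (adj_sym : symmetric adj) (adj_irr : irreflexive adj)
  (a b al be : 'I_n) (hab : adj a b) (halbe : adj al be)
  (i j : 'I_#|edges adj|)
  (hi : edge_of i = [set a; b]) (hj : edge_of j = [set al; be])
  (lam : R) (hlam : eigenvalue (signless_lap R adj) lam) (hlam0 : lam != 0) :
  eigenvalue (line_adj R adj) (lam - 2) /\
  forall (E : 'M[R]_n) (F : 'M[R]_#|edges adj|),
    is_eigenproj (signless_lap R adj) lam E ->
    is_eigenproj (line_adj R adj) (lam - 2) F ->
    forall s : bool,
      (F *m basis_vec R i = (-1) ^+ s *: (F *m basis_vec R j)) <->
      (E *m (basis_vec R a + basis_vec R b)
         = (-1) ^+ s *: (E *m (basis_vec R al + basis_vec R be))).
Proof.
have NNt := incidence_mx_mulmx_tr R adj_sym adj_irr.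
have NtN := tr_incidence_mx_mulmx R adj_irr.
split; first exact: eigenvalue_factor NNt NtN _ hlam hlam0.
move=> E F hE hF s.
rewrite -(incidence_mx_basis R adj_irr hab hi).
rewrite -(incidence_mx_basis R adj_irr halbe hj).
rewrite !scalemxAr.
exact: (eigenproj_mulmx_eq NNt NtN hE hF _ _ hlam0).
Qed.
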